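(* For every $n\ge 1$, $\gamma_{\rm i}(P_n)=\lceil n/2\rceil$, where $P_n$ is the path on $n$ vertices.
   Context: Indicated domination game on a graph $G$: two players, Dominator and Staller, alternate. In each round Dominator indicates a vertex $v$ not yet dominated by the vertices previously selected by Staller (a vertex dominates itself and its neighbors), and Staller must select a vertex of the closed neighborhood $N[v]$, adding it to a set $D$. The game ends when $D$ is a dominating set of $G$. Dominator wants to minimize $|D|$ and Staller to maximize it; the size of $D$ under optimal play of both is the indicated domination number $\gamma_{\rm i}(G)$. *)

From mathcomp Require Import all_boot.
Set Implicit Arguments. Unset Strict Implicit. Unset Printing Implicit Defensive.

Definition closed_nbhd (T : finType) (e : rel T) (v : T) : {set T} :=
  [set u | (u == v) || e v u].

Definition dominated (T : finType) (e : rel T) (D : {set T}) (v : T) : bool :=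
  [exists u in D, (u == v) || e u v].

Definition dominating (T : finType) (e : rel T) (D : {set T}) : bool :=
  [forall v, dominated e D v].

(* Value of the indicated domination game from position D (the set of
   vertices selected so far by Staller), with fuel k.  Dominator (min)
   indicates an undominated vertex v, Staller (max) selects u in N[v].
   Every move dominates a new vertex, so fuel #|T| suffices. *)
Fixpoint ind_val (T : finType) (e : rel T) (k : nat) (D : {set T}) : nat :=
  match k with
  | 0 => #|D|
  | k'.+1 =>
      if dominating e D then #|D|
      else \big[minn/#|T|]_(v | ~~ dominated e D v)
             \max_(u in closed_nbhd e v) ind_val e k' (u |: D)
  end.

Definition gamma_i (T : finType) (e : rel T) : nat := ind_val e #|T| set0.

Definition path_rel (n : nat) : rel 'I_n :=
  fun i j => (i.+1 == j :> nat) || (j.+1 == i :> nat).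
Arguments path_rel n : clear implicits.

From mathcomp Require Import all_boot order zify.
Set Implicit Arguments. Unset Strict Implicit. Unset Printing Implicit Defensive.
Import Order.TTheory.

(* Lower bound: in a bipartite graph with a side A, call an undominated vertex
   counted if it lies in A or all its neighbours are dominated.  Two adjacent
   vertices are never both counted, and every indicated vertex has a counted
   vertex u in its closed neighbourhood; selecting u newly dominates no counted
   vertex other than u itself.  So |D| + #counted never decreases when Staller
   plays this way, and it starts at |A|.  For P_n, A is the set of even vertices.
   Upper bound: while a prefix [0, m) is dominated, Dominator indicates m + 1.
   Staller then either extends the prefix by at least 2 vertices, or selects
   m + 2, leaving only m undominated in [0, m + 4); indicating m then costs one
   more move for 4 new vertices.  So each 2 vertices cost at most one move. *)

Section IndicatedGame.
Variables (T : finType) (e : rel T).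
Implicit Types (D : {set T}) (u v x : T).
Local Notation dom := (dominated e).

Definition undominated D := [set x | ~~ dom D x].

Lemma dominatedU1 D u x : dom (u |: D) x = [|| u == x, e u x | dom D x].
Proof.
apply/existsP/idP => [[y /andP[]]|].
- rewrite in_setU1 => /orP[/eqP-> /orP[->|->]|yD yx]; rewrite ?orbT //.
  by rewrite orbA orbC; apply/orP; left; apply/existsP; exists y; rewrite yD.
- case/or3P => [ux|ux|/existsP[y /andP[yD yx]]].
  + by exists u; rewrite setU11 ux.
  + by exists u; rewrite setU11 ux orbT.
  + by exists y; rewrite setU1r.
Qed.

Lemma dominatedS D u x : dom D x -> dom (u |: D) x.
Proof. by rewrite dominatedU1 => ->; rewrite !orbT. Qed.

Lemma dominated0 x : dom set0 x = false.
Proof. by apply/existsP => -[y]; rewrite inE. Qed.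

Lemma cardsU1_le D u : #|u |: D| <= #|D|.+1.
Proof. by rewrite cardsU1 -add1n leq_add2r leq_b1. Qed.

Lemma cardsU1_leq_add D u a b : a < b -> #|u |: D| + a <= #|D| + b.
Proof.
move=> ab; apply: leq_trans (leq_add (cardsU1_le D u) (leqnn a)) _.
by rewrite addSnnS leq_add2l.
Qed.

Lemma ind_val_dominating k D : dominating e D -> ind_val e k D = #|D|.
Proof. by case: k => //= k ->. Qed.

Lemma ind_val_le_indicate k D v b : ~~ dom D v ->
    (forall u, u \in closed_nbhd e v -> ind_val e k (u |: D) <= b) ->
  ind_val e k.+1 D <= b.
Proof.
move=> Dv le_b /=; have -> : dominating e D = false.
  by apply: contraNF Dv => /forallP.
apply: leq_trans (@bigmin_le_cond _ nat _ _ v _ _ Dv) _.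
exact/bigmax_leqP.
Qed.

Hypothesis e_sym : symmetric e.

Lemma closed_nbhd_dominated D u v : u \in closed_nbhd e v -> dom (u |: D) v.
Proof. by rewrite inE dominatedU1 e_sym => /orP[->|->]; rewrite ?orbT. Qed.

Lemma closed_nbhd_notin D u v : ~~ dom D v -> u \in closed_nbhd e v -> u \notin D.
Proof.
move=> Dv; rewrite inE e_sym => uv; apply: contra Dv => uD.
by apply/existsP; exists u; rewrite uD.
Qed.

Lemma card_undominatedU1 D u v : ~~ dom D v -> u \in closed_nbhd e v ->
  #|undominated (u |: D)| < #|undominated D|.
Proof.
move=> Dv uv; apply/proper_card/properP; split.
  by apply/subsetP => x; rewrite !inE; apply: contra; apply: dominatedS.
by exists v; rewrite !inE ?Dv // closed_nbhd_dominated.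
Qed.

Lemma card_dominated_undominated D : #|D| + #|undominated D| <= #|T|.
Proof.
rewrite -(cardsC D) leq_add2l; apply/subset_leq_card/subsetP => x.
by rewrite !inE; apply: contra => xD; apply/existsP; exists x; rewrite xD eqxx.
Qed.

Section Potential.
Variable phi : {set T} -> nat.
Hypothesis phi_le_undominated : forall D, phi D <= #|undominated D|.
Hypothesis phi_step : forall D v, ~~ dom D v ->
  exists2 u, u \in closed_nbhd e v & phi D <= (phi (u |: D)).+1.

Lemma ind_val_ge_potential k D :
  #|undominated D| <= k -> #|D| + phi D <= ind_val e k D.
Proof.
have phi0 D' : #|undominated D'| <= 0 -> phi D' = 0.
  by move=> D'0; apply/eqP; rewrite -leqn0 (leq_trans (phi_le_undominated D')).
elim: k D => [|k IH] D undD; first by rewrite phi0 ?addn0.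
rewrite /=; case: ifP => [/forallP domD|_].
  rewrite phi0 ?addn0 // leqn0 cards_eq0; apply/eqP/setP => x.
  by rewrite !inE domD.
apply/(@bigmin_geP _ nat); split.
  by apply: leq_trans (card_dominated_undominated D); rewrite leq_add2l.
move=> v Dv; have [u uv phiu] := phi_step Dv.
apply: leq_trans (leq_bigmax_cond _ uv); apply: leq_trans (IH _ _).
  by rewrite cardsU1 (closed_nbhd_notin Dv uv) add1n addSnnS leq_add2l.
by rewrite -ltnS (leq_trans (card_undominatedU1 Dv uv)).
Qed.

Lemma gamma_i_ge_potential : phi set0 <= gamma_i e.
Proof. by have := @ind_val_ge_potential #|T| set0 (max_card _); rewrite cards0. Qed.

End Potential.

Section Bipartite.
Variable A : {set T}.
Hypothesis A_bipartition : forall x y, e x y -> (x \in A) = (y \notin A).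

Definition counted D x :=
  ~~ dom D x && ((x \in A) || [forall y, e x y ==> dom D y]).

Definition potential D := #|[set x | counted D x]|.

Lemma counted_adj D x y : e x y -> counted D x -> ~~ counted D y.
Proof.
move=> exy /andP[Dx cx]; apply/negP => /andP[Dy cy].
have [xA|xA] := boolP (x \in A).
- move: cy; rewrite -[y \in A]negbK -(A_bipartition exy) xA /=.
  by move=> /forallP/(_ x); rewrite e_sym exy (negbTE Dx).
- by move: cx; rewrite (negbTE xA) /= => /forallP/(_ y); rewrite exy (negbTE Dy).
Qed.

Lemma exists_counted_nbhd D v : ~~ dom D v ->
  exists2 u, u \in closed_nbhd e v & counted D u.
Proof.
move=> Dv; have [cv|] := boolP (counted D v); first by exists v; rewrite // inE eqxx.
rewrite /counted Dv /= negb_or => /andP[vA /forallPn[y]].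
rewrite negb_imply => /andP[evy Dy]; exists y; first by rewrite inE evy orbT.
by rewrite /counted Dy -[y \in A]negbK -(A_bipartition evy) vA.
Qed.

Lemma potential_le_undominated D : potential D <= #|undominated D|.
Proof. by apply/subset_leq_card/subsetP => x; rewrite !inE => /andP[]. Qed.

Lemma potentialU1 D u : counted D u -> potential D <= (potential (u |: D)).+1.
Proof.
move=> cu; rewrite -add1n -(cards1 u); apply: leq_trans (leq_card_setU _ _).
apply/subset_leq_card/subsetP => x; rewrite !inE => cx.
case: (eqVneq x u) => //= xu.
have eux : e u x = false := contraTF (fun eux => counted_adj eux cu) cx.
case/andP: cx => Dx cx; apply/andP; split.
  by rewrite dominatedU1 eq_sym (negbTE xu) eux.
case/orP: cx => [->//|/forallP cx]; apply/orP; right.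
by apply/forallP => y; apply/implyP => /(implyP (cx y)); apply: dominatedS.
Qed.

Theorem gamma_i_ge_bipartition : #|A| <= gamma_i e.
Proof.
have step D v : ~~ dom D v ->
    exists2 u, u \in closed_nbhd e v & potential D <= (potential (u |: D)).+1.
  by move=> /exists_counted_nbhd[u uv cu]; exists u; last exact: potentialU1.
apply: leq_trans (gamma_i_ge_potential potential_le_undominated step).
apply/subset_leq_card/subsetP => x xA.
by rewrite inE /counted dominated0 xA.
Qed.

End Bipartite.
End IndicatedGame.

Lemma card_even_ord n : #|[set i : 'I_n | ~~ odd i]| = (n + 1) %/ 2.
Proof.
rewrite -sum1_card big_mkcond /=; under eq_bigr do rewrite inE.
rewrite -(big_mkord xpredT (fun i => if ~~ odd i then 1 else 0)).
elim: n => [|n IH]; first by rewrite big_nil.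
rewrite big_nat_recr //= IH; have := odd_double_half n.
by case: (odd n) => /=; lia.
Qed.

Section Path.
Variable n : nat.
Local Notation e := (path_rel n).
Local Notation dom := (dominated (path_rel n)).
Implicit Types (D : {set 'I_n}) (u v x : 'I_n).

Lemma path_rel_sym : symmetric e.
Proof. by move=> x y; rewrite /path_rel orbC. Qed.

Lemma path_bipartition x y :
  e x y -> (x \in [set i : 'I_n | ~~ odd i]) = (y \notin [set i : 'I_n | ~~ odd i]).
Proof. by rewrite !inE negbK => /orP[]/eqP <-; rewrite /= ?negbK. Qed.

Lemma path_dominatedU1 D u x :
  dom (u |: D) x = [|| u == x :> nat, u.+1 == x, x.+1 == u | dom D x].
Proof. by rewrite dominatedU1 /path_rel -orbA. Qed.

Lemma path_closed_nbhd u v :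
  u \in closed_nbhd e v = [|| u == v :> nat, v.+1 == u | u.+1 == v].
Proof. by rewrite inE. Qed.

Definition prefix_bound k := forall D m, dom D =1 (fun x => x < m) ->
  ind_val e k D <= #|D| + (n - m + 1) %/ 2.

Definition gap_bound k := forall D m, m < n ->
    dom D =1 (fun x => (x < m + 4) && (x != m :> nat)) ->
  ind_val e k D <= #|D| + 1 + (n - (m + 4) + 1) %/ 2.

Lemma gap_bound_step k : prefix_bound k -> gap_bound k.+1.
Proof.
move=> prefix_k D m mn hD.
apply: (ind_val_le_indicate (v := Ordinal mn)); first by rewrite hD /= eqxx andbF.
move=> u; rewrite path_closed_nbhd /= => um.
apply: leq_trans (prefix_k _ (m + 4) _) _; last by rewrite -addnA cardsU1_leq_add.
by move=> x; rewrite path_dominatedU1 hD; lia.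
Qed.

Lemma prefix_bound_step k : prefix_bound k -> gap_bound k -> prefix_bound k.+1.
Proof.
move=> prefix_k gap_k D m hD.
have [nm|mn] := leqP n m.
  rewrite ind_val_dominating ?leq_addr //; apply/forallP => x.
  by rewrite hD (leq_trans (ltn_ord x) nm).
have [m1n|n_m1] := ltnP m.+1 n.
- apply: (ind_val_le_indicate (v := Ordinal m1n)); first by rewrite hD /=; lia.
  move=> u; rewrite path_closed_nbhd /= => um.
  have ltu := ltn_ord u.
  have [u_m|[u_m1|u_m2]] : u = m :> nat \/ u = m.+1 :> nat \/ u = m.+2 :> nat by lia.
  + apply: leq_trans (prefix_k _ (m + 2) _) _; last by apply: cardsU1_leq_add; lia.
    by move=> x; rewrite path_dominatedU1 hD; lia.
  + apply: leq_trans (prefix_k _ (m + 3) _) _; last by apply: cardsU1_leq_add; lia.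
    by move=> x; rewrite path_dominatedU1 hD; lia.
  + apply: leq_trans (gap_k _ m mn _) _; last by rewrite -addnA; apply: cardsU1_leq_add; lia.
    by move=> x; rewrite path_dominatedU1 hD; lia.
- apply: (ind_val_le_indicate (v := Ordinal mn)); first by rewrite hD /= ltnn.
  move=> u; rewrite path_closed_nbhd /= => um.
  apply: leq_trans (prefix_k _ m.+1 _) _; last by apply: cardsU1_leq_add; lia.
  by move=> x; have := ltn_ord x; rewrite path_dominatedU1 hD; lia.
Qed.

Lemma path_bounds k : prefix_bound k /\ gap_bound k.
Proof.
elim: k => [|k [prefix_k gap_k]]; last first.
  by split; [apply: prefix_bound_step | apply: gap_bound_step].
by split=> D m *; rewrite /= -?addnA leq_addr.
Qed.

Lemma gamma_i_path_le : gamma_i e <= (n + 1) %/ 2.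
Proof.
have [prefix _] := path_bounds #|'I_n|.
have dom0 : dom set0 =1 (fun x => x < 0) by move=> x; rewrite dominated0 ltn0.
by have := prefix set0 0 dom0; rewrite cards0 subn0.
Qed.

End Path.

Theorem corollary5p3 (n : nat) : 1 <= n -> gamma_i (path_rel n) = (n + 1) %/ 2.
Proof.
move=> _; apply/eqP; rewrite eqn_leq gamma_i_path_le -card_even_ord.
exact: (gamma_i_ge_bipartition (@path_rel_sym n) (@path_bipartition n)).
Qed.
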